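(* Let $P$ be the transition matrix of a reversible and ergodic Markov chain on $V$ with stationary distribution $\pi$ and mixing rate $t^*$. For the billiard router model for $P$, with any initial configuration, $$\left|\chi^{(T)}_w-\mu^{(T)}_w\right|\le\frac{3\pi_w}{\pi_{\min}}\,t^*\,\Delta(\Delta-1)$$ for all $w\in V$ and $T\ge0$.
   Context: Let $V=\{1,\dots,N\}$ and let $P\in\mathbb{R}_{\ge 0}^{N\times N}$ be an ergodic (irreducible, aperiodic) stochastic matrix with stationary distribution $\pi$; $\pi_{\min}=\min_v\pi_v$; reversible means $\pi_uP_{u,v}=\pi_vP_{v,u}$ for all $u,v$. For $v\in V$ let $\mathcal N(v)=\{u: P_{v,u}>0\}$, $\delta(v)=|\mathcal N(v)|$, $\Delta=\max_v\delta(v)$. Total variation distance $d_{TV}(\xi,\zeta)=\frac12\|\xi-\zeta\|_1$; mixing time $\tau(\varepsilon)=\max_{v}\min\{t\ge0: d_{TV}(P^t_{v,\cdot},\pi)\le\varepsilon\}$; mixing rate $t^*=\tau(1/4)$. A functional-router model consists of functions $\sigma_v:\mathbb{Z}_{\ge0}\to\mathcal N(v)$; write $I_{v,u}[z,z')=|\{j\in\{z,\dots,z'-1\}:\sigma_v(j)=u\}|$ (zero if $z'\le z$). Given $\chi^{(0)}\in\mathbb{Z}_{\ge0}^N$, set $Z^{(t)}_{v,u}=I_{v,u}\big[\sum_{s=0}^{t-1}\chi^{(s)}_v,\sum_{s=0}^{t}\chi^{(s)}_v\big)$, $\chi^{(t+1)}_u=\sum_vZ^{(t)}_{v,u}$,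 $\mu^{(0)}=\chi^{(0)}$, $\mu^{(t)}=\mu^{(0)}P^t$. The billiard router is defined recursively: $\sigma_v(i)$ is an element $u\in\mathcal N(v)$ minimizing $(I_{v,u}[0,i)+1)/P_{v,u}$ (ties broken arbitrarily). It is known (billiard sequences) that for this router $|I_{v,u}[z,z')-(z'-z)P_{v,u}|\le 1+(\delta(v)-2)P_{v,u}$ for all $v,u$ and $z'>z\ge0$. *)

From HB Require Import structures.
From mathcomp Require Import all_boot all_order all_algebra.
Set Implicit Arguments. Unset Strict Implicit. Unset Printing Implicit Defensive.
Import Order.TTheory GRing.Theory Num.Theory.
Local Open Scope ring_scope.

Section Defs.
Variable R : realFieldType.
Variable N : nat.
Implicit Types (P : 'M[R]_N) (pi : 'rV[R]_N).

Definition mxpow P (t : nat) : 'M[R]_N := iter t (fun M => M *m P) 1%:M.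

Definition stochastic P : Prop :=
  (forall u v, 0 <= P u v) /\ (forall u, \sum_v P u v = 1).

Definition irreducible P : Prop :=
  forall u v, exists t, 0 < mxpow P t u v.

(* the gcd of {t >= 1 : P^t_{v,v} > 0} is 1: no d > 1 divides all its elements *)
Definition aperiodic P : Prop :=
  forall v (d : nat), (1 < d)%N ->
    exists t, [/\ (0 < t)%N, 0 < mxpow P t v v & ~~ (d %| t)%N].

Definition ergodic P : Prop := irreducible P /\ aperiodic P.

Definition stationary P pi : Prop :=
  (forall v, 0 <= pi 0 v) /\ \sum_v pi 0 v = 1 /\ pi *m P = pi.

Definition reversible P pi : Prop :=
  forall u v, pi 0 u * P u v = pi 0 v * P v u.

Definition dTV_row P pi (t : nat) (v : 'I_N) : R :=
  2^-1 * \sum_u `|mxpow P t v u - pi 0 u|.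

(* tau(eps) = max_v min { t : dTV(P^t_v, pi) <= eps } = tau *)
Definition is_mixing_time P pi (eps : R) (tau : nat) : Prop :=
  (forall v, exists t, (t <= tau)%N /\ dTV_row P pi t v <= eps) /\
  (exists v, forall t, (t < tau)%N -> eps < dTV_row P pi t v).

Definition is_mixing_rate P pi (tstar : nat) : Prop :=
  is_mixing_time P pi (4%:R)^-1 tstar.

Definition outdeg P (v : 'I_N) : nat := #|[set u | 0 < P v u]|.
Definition maxdeg P : nat := \max_(v < N) outdeg P v.

Definition Icount (sigma : 'I_N -> nat -> 'I_N) (v u : 'I_N) (z z' : nat) : nat :=
  count (fun j => sigma v j == u) (iota z (z' - z)).

Definition billiard_router P (sigma : 'I_N -> nat -> 'I_N) : Prop :=
  forall v i,
    0 < P v (sigma v i) /\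
    forall u, 0 < P v u ->
      ((Icount sigma v (sigma v i) 0 i).+1)%:R / P v (sigma v i)
        <= ((Icount sigma v u 0 i).+1)%:R / P v u.

(* state at time t: (chi^(t), sum_{s<t} chi^(s)) *)
Fixpoint router_state (sigma : 'I_N -> nat -> 'I_N) (chi0 : 'I_N -> nat) (t : nat)
  : ('I_N -> nat) * ('I_N -> nat) :=
  match t with
  | 0 => (chi0, fun _ => 0%N)
  | t'.+1 =>
      let (chi, cum) := router_state sigma chi0 t' in
      ((fun u => \sum_(v < N) Icount sigma v u (cum v) (cum v + chi v)),
       (fun v => cum v + chi v))
  end.

Definition chi (sigma : 'I_N -> nat -> 'I_N) (chi0 : 'I_N -> nat) (t : nat) : 'I_N -> nat :=
  (router_state sigma chi0 t).1.

Definition mu P (chi0 : 'I_N -> nat) (t : nat) : 'rV[R]_N :=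
  (\row_v (chi0 v)%:R) *m mxpow P t.

End Defs.

Definition pi_min (R : realFieldType) (n : nat) (pi : 'rV[R]_n.+1) : R :=
  \big[Num.min/pi 0 ord0]_(v < n.+1) pi 0 v.

(* Write c_t for the router configuration chi^(t) as a row vector, so that
   mu^(T) = c_0 P^T.  The gap c_T - c_0 P^T telescopes into the one-step
   errors c_(t+1) - c_t P, each propagated by P^(T-t-1).  The error of one
   step splits over the vertices v into vectors of zero mass, supported on
   the out-neighbours of v, whose entries are discrepancies of billiard
   sequences and hence at most Delta - 1.  Against a zero-mass vector the
   column P^s_(.,w) may be replaced by P^s_(.,w) - pi_w, whose l1 norm is at
   most pi_w / pi_min times the l1 deviation dev s w of the w-th row of P^s
   from pi, by reversibility; in-degrees are at most Delta for the same
   reason.  Finally dev s w is at most 2, at most 1/2 at the mixing rate t*,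
   and halves every t* steps, so that sum_(s < T) dev s w <= 3 t*. *)

From HB Require Import structures.
From mathcomp Require Import all_boot all_order all_algebra.
From mathcomp Require Import ring lra.
Set Implicit Arguments. Unset Strict Implicit. Unset Printing Implicit Defensive.
Import Order.TTheory GRing.Theory Num.Theory.
Local Open Scope ring_scope.

Section HalvingSums.
Variables (R : realFieldType) (t : nat).

(* If every term is at most 1/2 and shifting by t halves the terms, then all
   partial sums are at most t: S(m) <= S(m + t) = S(t) + S'(m) <= t/2 + S(m)/2. *)
Lemma halving_sum_le (f : nat -> R) m : (forall s, 0 <= f s) ->
  (forall s, f s <= 2^-1) -> (forall s, f (s + t)%N <= f s / 2) ->
  \sum_(s < m) f s <= t%:R.
Proof.
move=> f_ge0 f_half f_shift.
have S_le : \sum_(s < m) f s <= \sum_(s < (t + m)%N) f s.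
  by rewrite addnC big_split_ord /= lerDl; apply: sumr_ge0.
have head : \sum_(s < t) f s <= t%:R / 2.
  apply: le_trans (ler_sum _ (fun (s : 'I_t) _ => f_half s)) _.
  by rewrite sumr_const card_ord -[_ *+ t]mulr_natl.
have tail : \sum_(s < m) f (t + s)%N <= (\sum_(s < m) f s) / 2.
  by rewrite mulr_suml; apply: ler_sum => s _; rewrite addnC.
move: S_le; rewrite big_split_ord /=.
lra.
Qed.

(* A nonincreasing sequence bounded by 2, at most 1/2 at time t and halved
   by every shift by t, has all partial sums at most 2t + t = 3t. *)
Lemma halving_sum_le3 (f : nat -> R) T : (forall s, 0 <= f s) ->
  (forall s, f s <= 2) -> (forall s r, (s <= r)%N -> f r <= f s) ->
  f t <= 2^-1 -> (forall s, f (s + t)%N <= f s / 2) ->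
  \sum_(s < T) f s <= 3%:R * t%:R.
Proof.
move=> f_ge0 f_le2 f_mono ft f_shift.
have head : \sum_(s < t) f s <= 2 * t%:R.
  apply: le_trans (ler_sum _ (fun (s : 'I_t) _ => f_le2 s)) _.
  by rewrite sumr_const card_ord -[_ *+ t]mulr_natr.
have tail : \sum_(s < T) f (t + s)%N <= t%:R.
  apply: (halving_sum_le (f := fun s => f (t + s)%N)) => [s|s|s] /=.
  - exact: f_ge0.
  - by apply: le_trans ft; apply: f_mono; apply: leq_addr.
  - by rewrite addnA; apply: f_shift.
have S_le : \sum_(s < T) f s <= \sum_(s < (t + T)%N) f s.
  by rewrite addnC big_split_ord /= lerDl; apply: sumr_ge0.
move: S_le; rewrite big_split_ord /=; lra.
Qed.

End HalvingSums.

Section StochasticPowers.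
Variables (R : realFieldType) (n : nat) (P : 'M[R]_n.+1) (pi : 'rV[R]_n.+1).
Hypothesis P_ge0 : forall u v, 0 <= P u v.
Hypothesis P_rowsum : forall u, \sum_v P u v = 1.
Hypothesis pi_ge0 : forall v, 0 <= pi 0 v.
Hypothesis pi_sum1 : \sum_v pi 0 v = 1.
Hypothesis piP : pi *m P = pi.

Lemma mxpowE t : mxpow P t = P ^+ t.
Proof. by elim: t => [|t IH] //=; rewrite IH exprSr. Qed.

Lemma expP_ge0 s u v : 0 <= (P ^+ s) u v.
Proof.
elim: s u v => [|s IH] u v; first by rewrite expr0 mxE; case: eqP.
by rewrite exprSr mxE; apply: sumr_ge0 => y _; apply: mulr_ge0.
Qed.

Lemma expP_rowsum s u : \sum_v (P ^+ s) u v = 1.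
Proof.
elim: s u => [|s IH] u.
  rewrite expr0 (bigD1 u) //= big1 ?mxE ?eqxx ?addr0 // => v /negbTE.
  by rewrite mxE eq_sym => ->.
rewrite exprSr; under eq_bigr do rewrite mxE.
rewrite exchange_big /=; under eq_bigr do rewrite -mulr_sumr P_rowsum mulr1.
exact: IH.
Qed.

Lemma pi_expP s : pi *m P ^+ s = pi.
Proof. by elim: s => [|s IH]; rewrite ?expr0 ?mulmx1 // exprSr mulmxA IH piP. Qed.

Lemma l1_mulmx_expP (r : 'rV[R]_n.+1) t :
  \sum_u `|(r *m P ^+ t) 0 u| <= \sum_y `|r 0 y|.
Proof.
under eq_bigr do rewrite mxE.
apply: le_trans (ler_sum _ (fun u _ => ler_norm_sum _ _ _)) _.
rewrite exchange_big /=; apply: ler_sum => y _.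
under eq_bigr do rewrite normrM (ger0_norm (expP_ge0 _ _ _)).
by rewrite -mulr_sumr expP_rowsum mulr1.
Qed.

(* The deviation of the x-th row of P^s from pi, and its l1 norm [dev s x],
   which is twice the total variation distance d_TV(P^s_{x,.}, pi). *)
Definition devrow s x : 'rV[R]_n.+1 := row x (P ^+ s) - pi.
Definition dev s x : R := \sum_u `|devrow s x 0 u|.

Lemma devrowE s x u : devrow s x 0 u = (P ^+ s) x u - pi 0 u.
Proof. by rewrite !mxE. Qed.

Lemma devrow_add s t x : devrow (s + t)%N x = devrow s x *m P ^+ t.
Proof. by rewrite /devrow mulmxBl pi_expP exprD -row_mul. Qed.

Lemma devrow_sum0 s x : \sum_u devrow s x 0 u = 0.
Proof.
by under eq_bigr do rewrite devrowE; rewrite sumrB expP_rowsum pi_sum1 subrr.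
Qed.

Lemma dev_ge0 s x : 0 <= dev s x.
Proof. by apply: sumr_ge0 => u _. Qed.

Lemma dev_le2 s x : dev s x <= 2.
Proof.
rewrite /dev; under eq_bigr do rewrite devrowE.
apply: le_trans (ler_sum _ (fun u _ => ler_normB _ _)) _.
rewrite big_split /=.
under eq_bigr do rewrite ger0_norm ?expP_ge0 //.
under [X in _ + X]eq_bigr do rewrite ger0_norm ?pi_ge0 //.
by rewrite expP_rowsum pi_sum1.
Qed.

Lemma dev_mono s t x : (s <= t)%N -> dev t x <= dev s x.
Proof. by move=> /subnKC <-; rewrite /dev devrow_add l1_mulmx_expP. Qed.

(* Splitting s + t steps: the deviation after t steps is weighted by the
   deviation after s steps; this uses that devrow has zero total mass. *)
Lemma dev_add s t x : dev (s + t)%N x <= \sum_y `|devrow s x 0 y| * dev t y.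
Proof.
have E u : (devrow s x *m P ^+ t) 0 u = \sum_y devrow s x 0 y * devrow t y 0 u.
  under [RHS]eq_bigr do rewrite (devrowE t) mulrBr.
  by rewrite sumrB -mulr_suml devrow_sum0 mul0r subr0 mxE.
rewrite /dev devrow_add; under eq_bigr do rewrite E.
apply: le_trans (ler_sum _ (fun u _ => ler_norm_sum _ _ _)) _.
rewrite exchange_big /=; apply: ler_sum => y _.
by rewrite mulr_sumr; apply: ler_sum => u _; rewrite normrM.
Qed.

Lemma dev_halving s t x :
  (forall y, dev t y <= 2^-1) -> dev (s + t)%N x <= dev s x / 2.
Proof.
move=> half; apply: le_trans (dev_add s t x) _.
rewrite /dev mulr_suml; apply: ler_sum => y _.
by apply: ler_wpM2l => //; exact: half.
Qed.

Lemma dev_mixing_rate tstar x : is_mixing_rate P pi tstar -> dev tstar x <= 2^-1.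
Proof.
move=> [mix _]; have [t [t_le dTV_le]] := mix x.
apply: le_trans (dev_mono x t_le) _.
have -> : dev t x = \sum_u `|mxpow P t x u - pi 0 u|.
  by apply: eq_bigr => u _; rewrite devrowE mxpowE.
move: dTV_le; rewrite /dTV_row; lra.
Qed.

(* Summed over time, the deviation of a row is at most 3 t*: at most 2 per
   step up to t*, then halving every t* steps. *)
Lemma sum_dev_le tstar T x :
  is_mixing_rate P pi tstar -> \sum_(s < T) dev s x <= 3%:R * tstar%:R.
Proof.
move=> mix; have half y := dev_mixing_rate y mix.
apply: (halving_sum_le3 (f := fun s => dev s x)) => [s|s|||s].
- exact: dev_ge0.
- exact: dev_le2.
- by move=> s r; apply: dev_mono.
- exact: half.
- exact: dev_halving.
Qed.

Lemma expPSr k : P ^+ k *m P = P ^+ k.+1.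
Proof. by rewrite exprSr. Qed.

Lemma telescope (c : nat -> 'rV[R]_n.+1) T :
  c T - c 0%N *m P ^+ T = \sum_(t < T) (c t.+1 - c t *m P) *m P ^+ (T - t.+1)%N.
Proof.
elim: T => [|T IH]; first by rewrite big_ord0 expr0 mulmx1 subrr.
rewrite big_ord_recr /= subnn expr0 mulmx1.
have -> : \sum_(t < T) (c t.+1 - c t *m P) *m P ^+ (T.+1 - t.+1)
          = (\sum_(t < T) (c t.+1 - c t *m P) *m P ^+ (T - t.+1)%N) *m P.
  rewrite mulmx_suml; apply: eq_bigr => t _.
  by rewrite -mulmxA expPSr subSS subnSK.
by rewrite -IH mulmxBl -mulmxA expPSr addrC addrA subrK.
Qed.

End StochasticPowers.

Section Reversibility.
Variables (R : realFieldType) (n : nat) (P : 'M[R]_n.+1) (pi : 'rV[R]_n.+1).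
Hypothesis P_ge0 : forall u v, 0 <= P u v.
Hypothesis pi_ge0 : forall v, 0 <= pi 0 v.
Hypothesis pi_sum1 : \sum_v pi 0 v = 1.
Hypothesis piP : pi *m P = pi.
Hypothesis P_irr : irreducible P.
Hypothesis P_rev : reversible P pi.

(* Irreducibility spreads the mass of a stationary distribution everywhere. *)
Lemma pi_gt0 v : 0 < pi 0 v.
Proof.
have [u hu] : exists u, 0 < pi 0 u.
  case/boolP: [exists u, 0 < pi 0 u] => [/existsP //|/existsPn none].
  have : \sum_v pi 0 v <= 0 by apply: sumr_le0 => u _; rewrite leNgt none.
  by rewrite pi_sum1 ler10.
have [t Pt] := P_irr u v; rewrite mxpowE in Pt.
have := congr1 (fun r : 'rV[R]_n.+1 => r 0 v) (pi_expP piP t); rewrite mxE => <-.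
rewrite (bigD1 u) //=; apply: lt_le_trans (mulr_gt0 hu Pt) _.
rewrite lerDl; apply: sumr_ge0 => y _; apply: mulr_ge0 => //; exact: expP_ge0.
Qed.

Lemma pi_min_le u : pi_min pi <= pi 0 u.
Proof. by rewrite /pi_min (bigD1 u) //= ge_min lexx. Qed.

Lemma pi_min_gt0 : 0 < pi_min pi.
Proof.
rewrite /pi_min; elim/big_ind: _ => [|x y hx hy|i _]; rewrite ?lt_min ?hx ?hy //.
all: exact: pi_gt0.
Qed.

Lemma reversible_expP s u w : pi 0 u * (P ^+ s) u w = pi 0 w * (P ^+ s) w u.
Proof.
elim: s u w => [|s IH] u w.
  by rewrite expr0 !mxE; case: (eqVneq u w) => [->|]; rewrite ?mulr0.
rewrite {1}exprSr exprS !mxE !mulr_sumr; apply: eq_bigr => y _.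
by rewrite mulrA IH mulrAC P_rev -mulrA.
Qed.

(* A reversible chain with positive pi has the same in- and out-neighbours,
   so in-degrees are also bounded by the maximum degree. *)
Lemma indeg_le u : (#|[set v | (0 < P v u)%R]| <= maxdeg P)%N.
Proof.
have -> : #|[set v | 0 < P v u]| = outdeg P u.
  apply: eq_card => v; rewrite !inE.
  by rewrite -(pmulr_rgt0 _ (pi_gt0 v)) P_rev (pmulr_rgt0 _ (pi_gt0 u)).
exact: (@leq_bigmax _ (fun v => outdeg P v) u).
Qed.

(* By detailed balance, the deviation of the w-th column of P^s from pi_w is
   controlled by the deviation of the w-th row. *)
Lemma col_dev_le s w :
  \sum_u `|(P ^+ s) u w - pi 0 w| <= pi 0 w / pi_min pi * dev P pi s w.
Proof.
have pi_pos := pi_gt0; have min_pos := pi_min_gt0.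
rewrite /dev mulr_sumr; apply: ler_sum => u _; rewrite devrowE.
have -> : (P ^+ s) u w - pi 0 w = pi 0 w / pi 0 u * ((P ^+ s) w u - pi 0 u).
  apply: (mulfI (x := pi 0 u)); first by rewrite gt_eqF.
  rewrite mulrBr reversible_expP mulrA mulrCA mulfV ?gt_eqF // mulr1 mulrBr; ring.
rewrite normrM (ger0_norm (x := pi 0 w / pi 0 u)); last exact: divr_ge0.
apply: ler_wpM2r => //.
by rewrite ler_pdivrMr // mulrAC ler_pdivlMr // ler_pM2l // pi_min_le.
Qed.

Lemma propagated_error_le (E : 'I_n.+1 -> 'I_n.+1 -> R) c s w :
  0 <= c -> (forall v, \sum_u E v u = 0) ->
  (forall v u, `|E v u| <= if 0 < P v u then c else 0) ->
  `|\sum_u (\sum_v E v u) * (P ^+ s) u w|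
     <= c * (maxdeg P)%:R * (pi 0 w / pi_min pi * dev P pi s w).
Proof.
move=> c_ge0 E_sum0 E_le.
have -> : \sum_u (\sum_v E v u) * (P ^+ s) u w
          = \sum_v \sum_u E v u * ((P ^+ s) u w - pi 0 w).
  under eq_bigr do rewrite mulr_suml.
  rewrite exchange_big /=; apply: eq_bigr => v _.
  under [RHS]eq_bigr do rewrite mulrBr.
  by rewrite sumrB -mulr_suml E_sum0 mul0r subr0.
apply: le_trans (ler_norm_sum _ _ _) _.
apply: (@le_trans _ _ (\sum_v \sum_u
          (if 0 < P v u then c else 0) * `|(P ^+ s) u w - pi 0 w|)).
  apply: ler_sum => v _; apply: le_trans (ler_norm_sum _ _ _) _.
  by apply: ler_sum => u _; rewrite normrM; apply: ler_wpM2r.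
rewrite exchange_big /=.
apply: (@le_trans _ _ (\sum_u c * (maxdeg P)%:R * `|(P ^+ s) u w - pi 0 w|)).
  apply: ler_sum => u _; rewrite -mulr_suml; apply: ler_wpM2r => //.
  rewrite -big_mkcond /= sumr_const -[c *+ _]mulr_natr; apply: ler_wpM2l => //.
  rewrite ler_nat; apply: leq_trans (indeg_le u).
  by rewrite (@eq_card _ _ [set v | 0 < P v u]) // => v; rewrite inE.
by rewrite -mulr_sumr; apply: ler_wpM2l; rewrite ?mulr_ge0 ?col_dev_le.
Qed.

End Reversibility.

Section BilliardSequence.
Variables (R : realFieldType) (n : nat) (P : 'M[R]_n.+1).
Variables (sigma : 'I_n.+1 -> nat -> 'I_n.+1) (v : 'I_n.+1).
Hypothesis P_ge0 : forall u v, 0 <= P u v.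
Hypothesis P_rowsum : forall u, \sum_v P u v = 1.
Hypothesis router : billiard_router P sigma.

Lemma sum_Icount z z' : (\sum_u Icount sigma v u z z')%N = (z' - z)%N.
Proof.
rewrite /Icount -[in RHS](size_iota z (z' - z)).
elim: (iota _ _) => [|j s IH] /=; first by rewrite big1.
rewrite big_split /= IH (bigD1 (sigma v j)) //= eqxx big1 ?addn0 ?add1n //.
by move=> u /negbTE; rewrite eq_sym => ->.
Qed.

Definition visits u i : nat := Icount sigma v u 0 i.

Lemma visitsS u i : visits u i.+1 = (visits u i + (sigma v i == u))%N.
Proof.
by rewrite /visits /Icount !subn0 -[i.+1]addn1 iotaD count_cat /= addn0 add0n.
Qed.

Lemma visits_mono u i j : (i <= j)%N -> (visits u i <= visits u j)%N.
Proof.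
move=> /subnKC <-; elim: (j - i)%N => [|k IH]; first by rewrite addn0.
by rewrite addnS visitsS; apply: leq_trans IH (leq_addr _ _).
Qed.

Lemma Icount_visits u z z' :
  (z <= z')%N -> Icount sigma v u z z' = (visits u z' - visits u z)%N.
Proof.
move=> /subnKC <-; rewrite /visits /Icount !subn0 iotaD count_cat add0n.
by rewrite addKn addnC addnK.
Qed.

Lemma visits_off_support u i : ~~ (0 < P v u) -> visits u i = 0%N.
Proof.
move=> Pvu; elim: i => [|i IH] //; rewrite visitsS IH.
by case: eqP => // e; move: Pvu; rewrite -e (router v i).1.
Qed.

Let deg := outdeg P v.

Lemma deg_ge1 : (1 <= deg)%N.
Proof.
by rewrite card_gt0; apply/set0Pn; exists (sigma v 0); rewrite inE (router v 0).1.
Qed.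

Lemma support_sum_P : \sum_(u | 0 < P v u) P v u = 1.
Proof.
rewrite big_mkcond /= -(P_rowsum v); apply: eq_bigr => u _.
case: ifP => // /negbT; rewrite -leNgt => Pvu.
by apply/eqP; rewrite eq_le Pvu P_ge0.
Qed.

Lemma support_sum_visits i : \sum_(u | 0 < P v u) (visits u i)%:R = i%:R :> R.
Proof.
rewrite big_mkcond /= -[in RHS](subn0 i) -sum_Icount natr_sum.
apply: eq_bigr => u _; case: ifP => // /negbT Pvu.
by rewrite -/(visits u i) visits_off_support.
Qed.

Lemma support_card : \sum_(u | 0 < P v u) 1 = deg%:R :> R.
Proof. by rewrite sumr_const /deg /outdeg cardsE. Qed.

(* key i is the value (I_{v,u}[0,i) + 1) / P_{v,u} that the router minimizes
   when it chooses u = sigma_v(i): the "time" of the i-th billiard bounce. *)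
Definition key i : R := (visits (sigma v i) i).+1%:R / P v (sigma v i).

Lemma key_min u i : 0 < P v u -> key i <= (visits u i).+1%:R / P v u.
Proof. exact: (router v i).2. Qed.

Lemma key_ge0 i : 0 <= key i.
Proof. by apply: divr_ge0 => //; apply: ltW; apply: (router v i).1. Qed.

Lemma key_mono i : key i <= key i.+1.
Proof.
have Pvs := (router v i.+1).1.
apply: le_trans (key_min i Pvs) _.
by apply: ler_wpM2r; [rewrite invr_ge0 ltW | rewrite ler_nat ltnS visits_mono].
Qed.

Lemma visits_le_key u i : (visits u i.+1)%:R <= key i * P v u.
Proof.
have chosen j : (visits (sigma v j) j.+1)%:R = key j * P v (sigma v j).
  rewrite visitsS eqxx addn1 /key mulfVK //.
  by rewrite gt_eqF //; apply: (router v j).1.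
have other j : sigma v j != u -> visits u j.+1 = visits u j.
  by move=> ne; rewrite visitsS (negbTE ne) addn0.
elim: i => [|i IH].
  case: (eqVneq (sigma v 0) u) => [<-|ne]; first by rewrite chosen.
  by rewrite other //; change (visits u 0) with 0%N; rewrite mulr_ge0 ?key_ge0.
case: (eqVneq (sigma v i.+1) u) => [<-|ne]; first by rewrite chosen.
rewrite other //; apply: le_trans IH _.
by apply: ler_wpM2r => //; exact: key_mono.
Qed.

Lemma key_lower i : i.+1%:R <= key i.
Proof.
rewrite -[i.+1]subn0 -sum_Icount natr_sum -[key i]mulr1.
rewrite -[X in key i * X](P_rowsum v) mulr_sumr.
by apply: ler_sum => u _; exact: visits_le_key.
Qed.

Lemma key_upper i : key i <= i%:R + deg%:R.
Proof.
rewrite -support_sum_visits -support_card -big_split /=.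
rewrite -[key i]mulr1 -[X in key i * X]support_sum_P mulr_sumr.
apply: ler_sum => u Pvu.
by rewrite natr1 -ler_pdivlMr //; exact: key_min.
Qed.

Lemma visits_lower u i : 0 < P v u -> i.+1%:R * P v u <= (visits u i).+1%:R.
Proof.
move=> Pvu; rewrite -ler_pdivlMr //.
exact: le_trans (key_lower i) (key_min i Pvu).
Qed.

Lemma visits_upper u i : (visits u i)%:R <= (i%:R + deg%:R - 1) * P v u.
Proof.
case: i => [|i]; first by rewrite add0r mulr_ge0 // subr_ge0 ler1n deg_ge1.
apply: le_trans (visits_le_key u i) _; apply: ler_wpM2r => //.
by rewrite -natr1 addrAC addrK; exact: key_upper.
Qed.

Lemma billiard_discrepancy u z z' : (z <= z')%N -> 0 < P v u ->
  `|(Icount sigma v u z z')%:R - (z' - z)%:R * P v u|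
     <= 1 + (deg%:R - 2) * P v u.
Proof.
move=> zz' Pvu; rewrite Icount_visits // !natrB ?visits_mono //.
have := visits_lower z Pvu; have := visits_lower z' Pvu.
have := visits_upper u z; have := visits_upper u z'.
rewrite -!natr1 ler_norml.
set p := P v u; set a := (visits u z)%:R; set b := (visits u z')%:R.
move=> *; apply/andP; split; nra.
Qed.

Lemma deg1_P1 u : deg = 1%N -> 0 < P v u -> P v u = 1.
Proof.
move=> /eqP /cards1P [x /setP supp_x] Pvu.
have supp_u w : (0 < P v w) = (w == u).
  have := supp_x u; rewrite !inE Pvu => /esym/eqP ->.
  by have := supp_x w; rewrite !inE.
by rewrite -support_sum_P (big_pred1 u).
Qed.

Lemma discrepancy_le_maxdeg u z z' : (z <= z')%N ->
  `|(Icount sigma v u z z')%:R - (z' - z)%:R * P v u|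
     <= if 0 < P v u then ((maxdeg P).-1)%:R else 0.
Proof.
move=> zz'; case: ifP => [Pvu|/negbT Pvu]; last first.
  have -> : P v u = 0 by apply/eqP; rewrite eq_le P_ge0 andbT leNgt.
  by rewrite mulr0 subr0 Icount_visits // !visits_off_support // normr0.
apply: le_trans (billiard_discrepancy zz' Pvu) _.
have deg_le : (deg <= maxdeg P)%N := @leq_bigmax _ (fun w => outdeg P w) v.
have P_le1 : P v u <= 1.
  by rewrite -(P_rowsum v) (bigD1 u) //= lerDl sumr_ge0.
rewrite -subn1 natrB ?(leq_trans deg_ge1 deg_le) //.
case: (ltngtP deg 1) => [|deg_gt1|deg1]; first by rewrite ltnNge deg_ge1.
  have : 2%:R <= deg%:R :> R by rewrite ler_nat.
  have : deg%:R <= (maxdeg P)%:R :> R by rewrite ler_nat.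
  by move=> *; nra.
have : 1%:R <= (maxdeg P)%:R :> R by rewrite ler_nat -deg1.
by rewrite deg1_P1 // deg1 => *; lra.
Qed.

End BilliardSequence.

Section RouterDynamics.
Variables (R : realFieldType) (n : nat) (P : 'M[R]_n.+1).
Variables (sigma : 'I_n.+1 -> nat -> 'I_n.+1) (chi0 : 'I_n.+1 -> nat).
Hypothesis P_ge0 : forall u v, 0 <= P u v.
Hypothesis P_rowsum : forall u, \sum_v P u v = 1.
Hypothesis router : billiard_router P sigma.

Local Notation chi := (chi sigma chi0).

(* sent t v = chi^(0)_v + ... + chi^(t-1)_v, the tokens that left v before
   time t; in step t vertex v routes the window [sent t v, sent t.+1 v). *)
Definition sent t : 'I_n.+1 -> nat := (router_state sigma chi0 t).2.

Lemma chiS t u :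
  chi t.+1 u = (\sum_v Icount sigma v u (sent t v) (sent t v + chi t v))%N.
Proof. by rewrite /chi /sent /=; case: (router_state sigma chi0 t). Qed.

Definition config t : 'rV[R]_n.+1 := \row_v (chi t v)%:R.

Definition step_err t v u : R :=
  (Icount sigma v u (sent t v) (sent t v + chi t v))%:R - (chi t v)%:R * P v u.

Lemma config_step t u : (config t.+1 - config t *m P) 0 u = \sum_v step_err t v u.
Proof.
rewrite !mxE chiS natr_sum sumrB; congr (_ - _).
by apply: eq_bigr => v _; rewrite mxE.
Qed.

Lemma step_err_sum0 t v : \sum_u step_err t v u = 0.
Proof.
by rewrite sumrB -natr_sum sum_Icount addKn -mulr_sumr P_rowsum mulr1 subrr.
Qed.

Lemma step_err_le t v u :
  `|step_err t v u| <= if 0 < P v u then ((maxdeg P).-1)%:R else 0.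
Proof.
have sent_le := leq_addr (chi t v) (sent t v).
by have := discrepancy_le_maxdeg v P_ge0 P_rowsum router u sent_le; rewrite addKn.
Qed.

(* The error of step t, propagated for s more steps, is small at w: the
   edge errors of each vertex have zero mass and are bounded by Delta - 1. *)
Lemma step_error_le (pi : 'rV[R]_n.+1) t s w :
  (forall v, 0 <= pi 0 v) -> \sum_v pi 0 v = 1 -> pi *m P = pi ->
  irreducible P -> reversible P pi ->
  `|((config t.+1 - config t *m P) *m P ^+ s) 0 w|
     <= ((maxdeg P).-1)%:R * (maxdeg P)%:R * (pi 0 w / pi_min pi * dev P pi s w).
Proof.
move=> pi_ge0 pi_sum1 piP P_irr P_rev.
rewrite mxE; under eq_bigr do rewrite config_step.
apply: propagated_error_le => //; first exact: step_err_sum0.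
exact: step_err_le.
Qed.

End RouterDynamics.

Arguments config {R n} sigma chi0 t.

Theorem theorem5p3 (R : realFieldType) (n : nat)
  (P : 'M[R]_n.+1) (pi : 'rV[R]_n.+1) (tstar : nat)
  (sigma : 'I_n.+1 -> nat -> 'I_n.+1) (chi0 : 'I_n.+1 -> nat) :
  stochastic P -> ergodic P -> stationary P pi -> reversible P pi ->
  is_mixing_rate P pi tstar ->
  billiard_router P sigma ->
  forall (w : 'I_n.+1) (T : nat),
    `|(chi sigma chi0 T w)%:R - mu P chi0 T 0 w|
      <= 3%:R * pi 0 w / pi_min pi * tstar%:R
         * ((maxdeg P) * (maxdeg P).-1)%:R.
Proof.
move=> [P_ge0 P_rowsum] [P_irr _] [pi_ge0 [pi_sum1 piP]] P_rev mix router w T.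
have pi_min_pos := pi_min_gt0 P_ge0 pi_ge0 pi_sum1 piP P_irr.
have ratio_ge0 : 0 <= pi 0 w / pi_min pi := divr_ge0 (pi_ge0 w) (ltW pi_min_pos).
have deg_ge0 : 0 <= ((maxdeg P).-1)%:R * (maxdeg P)%:R :> R by rewrite mulr_ge0.
have -> : (chi sigma chi0 T w)%:R - mu P chi0 T 0 w
          = (config sigma chi0 T - config sigma chi0 0 *m P ^+ T) 0 w.
  by rewrite /mu mxpowE !mxE.
rewrite telescope summxE; apply: le_trans (ler_norm_sum _ _ _) _.
apply: le_trans (ler_sum _ (fun (t : 'I_T) _ => step_error_le chi0 P_ge0 P_rowsum
                   router t (T - t.+1)%N w pi_ge0 pi_sum1 piP P_irr P_rev)) _.
rewrite -!mulr_sumr.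
have -> : \sum_(t < T) dev P pi (T - t.+1)%N w = \sum_(s < T) dev P pi s w.
  by rewrite [RHS](reindex_inj rev_ord_inj).
have sum_le := sum_dev_le P_ge0 P_rowsum pi_ge0 pi_sum1 piP T w mix.
apply: le_trans (ler_wpM2l deg_ge0 (ler_wpM2l ratio_ge0 sum_le)) _.
by rewrite le_eqVlt natrM; apply/orP; left; apply/eqP; ring.
Qed.
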